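(* Let $k$ be a positive integer. In any prime $k$th-power distance labeling of the complete graph $K_4$, the four vertex labels do not all have the same parity.
   Context: A prime $k$th-power distance labeling of a graph $G$ is an injective map $L:V(G)\to\mathbb{Z}$ such that for every edge $uv$ of $G$, $|L(u)-L(v)|=p^j$ for some prime $p$ and some positive integer $j\le k$. *)

From mathcomp Require Import all_boot all_order all_algebra.
Set Implicit Arguments. Unset Strict Implicit. Unset Printing Implicit Defensive.
Import Order.TTheory GRing.Theory Num.Theory.

Definition prime_kth_power_distance_labeling (T : finType) (adj : rel T)
    (k : nat) (L : T -> int) : Prop :=
  injective L /\
  forall u v : T, adj u v ->
    exists p j : nat, [/\ prime p, (0 < j)%N, (j <= k)%N &
      `|L u - L v|%R = Posz (p ^ j)].

Definition complete_adj (n : nat) : rel 'I_n := fun u v => u != v.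

From mathcomp Require Import all_boot all_order all_algebra zify.
Import Order.TTheory GRing.Theory Num.Theory.

Set Implicit Arguments.
Unset Strict Implicit.
Unset Printing Implicit Defensive.

(* If all four labels had the same parity, every distance would be an even
   prime power, hence a power of 2.  For three distinct integers the largest
   distance is the sum of the other two, and 2^a + 2^b = 2^c forces a = b, so
   one of the three labels is the midpoint of the other two.  But among four
   distinct integers x0 < x1 < x2 < x3 this makes x1 and x2 the midpoints of
   their neighbours, and then the triple x0, x1, x3 (distances d, 2d, 3d) has
   no midpoint. *)

Lemma expn2_addn_eq a b c : 2 ^ a + 2 ^ b = 2 ^ c -> a = b.
Proof.
elim: a b c => [|a IH] [|b] [|c] //=; rewrite ?expnS; try lia.
by move=> h; congr S; apply: (IH b c); lia.
Qed.

Lemma even_prime_power p j : prime p -> (0 < j)%N -> ~~ odd (p ^ j) -> p = 2.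
Proof.
move=> pp j0; rewrite oddX; case: j j0 => // j _ /= op.
by case: (even_prime pp) => // p_odd; rewrite p_odd in op.
Qed.

Definition has_midpoint (x y z : int) : Prop :=
  (2 * x = y + z \/ 2 * y = x + z \/ 2 * z = x + y)%R.

Lemma dyadic_triangle_has_midpoint (x y z : int) a b c :
    x != y -> y != z -> x != z ->
    `|x - y|%R = Posz (2 ^ a) -> `|y - z|%R = Posz (2 ^ b) ->
    `|x - z|%R = Posz (2 ^ c) ->
  has_midpoint x y z.
Proof.
move=> nxy nyz nxz hxy hyz hxz; rewrite /has_midpoint.
have [e|[e|e]] : 2 ^ a + 2 ^ b = 2 ^ c \/ 2 ^ a + 2 ^ c = 2 ^ b
                 \/ 2 ^ b + 2 ^ c = 2 ^ a by lia.
- by move: hxy (e); rewrite (expn2_addn_eq e); lia.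
- by move: hxy (e); rewrite (expn2_addn_eq e); lia.
- by move: hyz (e); rewrite (expn2_addn_eq e); lia.
Qed.

Lemma no_four_points_with_all_midpoints (x0 x1 x2 x3 : int) :
    x0 != x1 -> x0 != x2 -> x0 != x3 -> x1 != x2 -> x1 != x3 -> x2 != x3 ->
    has_midpoint x0 x1 x2 -> has_midpoint x0 x1 x3 ->
    has_midpoint x0 x2 x3 -> has_midpoint x1 x2 x3 ->
  False.
Proof. rewrite /has_midpoint; lia. Qed.

Section SameParityLabeling.

Variables (n k : nat) (L : 'I_n -> int).
Hypothesis labL : prime_kth_power_distance_labeling (@complete_adj n) k L.
Hypothesis same_parity : forall u v : 'I_n, (L u %% 2)%Z = (L v %% 2)%Z.

Lemma labeling_neq (u v : 'I_n) : u != v -> L u != L v.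
Proof. by move=> nuv; apply: contra nuv => /eqP /labL.1 ->. Qed.

Lemma same_parity_dyadic_distance (u v : 'I_n) :
  u != v -> exists e, `|L u - L v|%R = Posz (2 ^ e).
Proof.
move=> nuv; have [p [j [pp j0 _ dist]]] := labL.2 u v nuv.
have p2 : p = 2.
  apply: (even_prime_power pp j0).
  by have := same_parity u v; rewrite -dvdn2; lia.
by exists j; rewrite dist p2.
Qed.

Lemma same_parity_has_midpoint (u v w : 'I_n) :
  u != v -> v != w -> u != w -> has_midpoint (L u) (L v) (L w).
Proof.
move=> nuv nvw nuw.
have [a huv] := same_parity_dyadic_distance nuv.
have [b hvw] := same_parity_dyadic_distance nvw.
have [c huw] := same_parity_dyadic_distance nuw.
by apply: dyadic_triangle_has_midpoint huv hvw huw;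
  apply: labeling_neq.
Qed.

End SameParityLabeling.

Theorem mainTheorem9 (k : nat) (hk : (0 < k)%N) (L : 'I_4 -> int) :
  prime_kth_power_distance_labeling (@complete_adj 4) k L ->
  exists u v : 'I_4, (L u %% 2)%Z != (L v %% 2)%Z.
Proof.
move=> labL.
case: (pickP (fun v : 'I_4 => (L v %% 2)%Z != (L ord0 %% 2)%Z)) => [v hv|same].
  by exists v, ord0.
exfalso.
have parity u v : (L u %% 2)%Z = (L v %% 2)%Z.
  by rewrite (eqP (negbFE (same u))) (eqP (negbFE (same v))).
have neq := labeling_neq labL.
have mid := same_parity_has_midpoint labL parity.
pose i0 := @Ordinal 4 0 isT; pose i1 := @Ordinal 4 1 isT.
pose i2 := @Ordinal 4 2 isT; pose i3 := @Ordinal 4 3 isT.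
by apply: (@no_four_points_with_all_midpoints (L i0) (L i1) (L i2) (L i3));
  (apply: neq || apply: mid).
Qed.
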